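(* Let $\widehat{\mathcal T}_\bullet$ be an admissible hierarchical mesh and $\widehat{\mathcal M}_\bullet=\{\widehat T_1,\dots,\widehat T_n\}\subseteq\widehat{\mathcal T}_\bullet$. Then $${\tt refine}(\widehat{\mathcal T}_\bullet,\widehat{\mathcal M}_\bullet)={\tt refine}\big({\tt refine}(\cdots{\tt refine}(\widehat{\mathcal T}_\bullet,\{\widehat T_1\})\cdots,\{\widehat T_{n-1}\}),\{\widehat T_n\}\big),$$ with the convention ${\tt refine}(\widehat{\mathcal T},\widehat{\mathcal M}):={\tt refine}(\widehat{\mathcal T},\widehat{\mathcal M}\cap\widehat{\mathcal T})$ for arbitrary sets $\widehat{\mathcal M}$ (so ${\tt refine}(\widehat{\mathcal T},\emptyset)=\widehat{\mathcal T}$).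
   Context: Parameter domain $\widehat\Omega=(0,1)^d$, $d\ge2$; degrees $p_1,\dots,p_d\ge1$. For each $i$, $\widehat{\mathcal K}^0_i$ is a $p_i$-open knot vector in $[0,1]$ (first $p_i+1$ knots $0$, last $p_i+1$ knots $1$, interior multiplicities $\le p_i$); $\widehat{\mathcal K}^{k+1}_i$ arises from $\widehat{\mathcal K}^k_i$ by inserting each nondegenerate span's midpoint once. $\widehat{\mathcal B}^k$: tensor-product B-splines of degree $(p_1,\dots,p_d)$ for $\widehat{\mathcal K}^k$; $\widehat{\mathcal T}^k$: closed cells of level $k$. A hierarchical mesh is given by closed sets $[0,1]^d=\widehat\Omega^0_\bullet\supseteq\widehat\Omega^1_\bullet\supseteq\cdots$, each $\widehat\Omega^k_\bullet$ ($k\ge1$) a union of cells of $\widehat{\mathcal T}^{k-1}$, eventually empty; mesh $\widehat{\mathcal T}_\bullet=\bigcup_k\{\widehat T\in\widehat{\mathcal T}^k:\widehat T\subseteq\widehat\Omega^k_\bullet,\widehat T\not\subseteq\widehat\Omega^{k+1}_\bullet\}$, ${\rm level}(\widehat T)=k$; hierarchical basis $\widehat{\mathcal H}_\bullet=\bigcup_k\{\widehat\beta\in\widehat{\mathcal B}^k:{\rm supp}\,\widehat\beta\subseteq\widehat\Omega^k_\bullet,{\rm supp}\,\widehat\beta\not\subseteq\widehat\Omega^{k+1}_\bullet\}$. Neighbors $\mathcal N_\bullet(\widehat T)=\{\widehat T'\in\widehat{\mathcal T}_\bullet:\exists\widehat\beta\in\widehat{\mathcal H}_\bullet,\widehat T,\widehat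 T'\subseteq{\rm supp}\,\widehat\beta\}$; bad neighbors $\mathcal N^{\rm bad}_\bullet(\widehat T)=\{\widehat T'\in\mathcal N_\bullet(\widehat T):{\rm level}(\widehat T')={\rm level}(\widehat T)-1\}$. Admissible: $|{\rm level}(\widehat T)-{\rm level}(\widehat T')|\le1$ whenever $\widehat T'\in\mathcal N_\bullet(\widehat T)$. ${\tt refine}(\widehat{\mathcal T}_\bullet,\widehat{\mathcal M})$ for $\widehat{\mathcal M}\subseteq\widehat{\mathcal T}_\bullet$: $\widehat{\mathcal M}^{(0)}=\widehat{\mathcal M}$, $\widehat{\mathcal M}^{(i+1)}=\widehat{\mathcal M}^{(i)}\cup\bigcup_{\widehat T\in\widehat{\mathcal M}^{(i)}}\mathcal N^{\rm bad}_\bullet(\widehat T)$ until stationary; each $\widehat T$ in the final set is added to $\widehat\Omega^{{\rm level}(\widehat T)+1}$, giving the new mesh. *)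

From HB Require Import structures.
From mathcomp Require Import all_boot all_order all_algebra.
Set Implicit Arguments. Unset Strict Implicit. Unset Printing Implicit Defensive.
Import Order.TTheory GRing.Theory Num.Theory.
Local Open Scope ring_scope.

Section Hier.
Variables (R : realFieldType) (d : nat) (p : 'I_d -> nat) (K0 : 'I_d -> seq R).

Definition open_knots (q : nat) (t : seq R) : Prop :=
  [/\ sorted <=%R t, (2 * q.+1 <= size t)%N,
      take q.+1 t = nseq q.+1 0, drop (size t - q.+1) t = nseq q.+1 1
    & forall v : R, 0 < v < 1 -> (count_mem v t <= q)%N].

Fixpoint ins_mid (t : seq R) : seq R :=
  match t with
  | a :: t' =>
      match t' with
      | b :: _ => if a < b then a :: (a + b) / 2%:R :: ins_mid t'
                  else a :: ins_mid t'
      | [::] => [:: a]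
      end
  | [::] => [::]
  end.

Definition knots (k : nat) (i : 'I_d) : seq R := iter k ins_mid (K0 i).

Definition pt := 'I_d -> R.
Definition region := pt -> Prop.
(* a hierarchy: k |-> Omega^k (as a point set) *)
Definition hier := nat -> region.

(* cells and B-splines are indexed by (level k, multi-index j) *)
Definition cell := (nat * {ffun 'I_d -> nat})%type.

Definition in_box (lo hi : pt) : region := fun x => forall i, lo i <= x i <= hi i.
Definition subr (A B : region) : Prop := forall x, A x -> B x.

Definition is_cell (c : cell) : Prop :=
  forall i, ((c.2 i).+1 < size (knots c.1 i))%N /\
            nth 0 (knots c.1 i) (c.2 i) < nth 0 (knots c.1 i) (c.2 i).+1.
Definition cell_box (c : cell) : region :=
  in_box (fun i => nth 0 (knots c.1 i) (c.2 i))
         (fun i => nth 0 (knots c.1 i) (c.2 i).+1).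

Definition is_bspl (b : cell) : Prop :=
  forall i, ((b.2 i + p i).+1 < size (knots b.1 i))%N.
Definition supp_box (b : cell) : region :=
  in_box (fun i => nth 0 (knots b.1 i) (b.2 i))
         (fun i => nth 0 (knots b.1 i) (b.2 i + p i).+1).

Definition hier_mesh (O : hier) : Prop :=
  [/\ forall x, O 0%N x <-> (forall i, 0 <= x i <= 1),
      forall k x, O k.+1 x -> O k x,
      forall k, exists cs : seq cell,
        (forall c, c \in cs -> is_cell c /\ c.1 = k) /\
        (forall x, O k.+1 x <-> exists2 c, c \in cs & cell_box c x)
    & exists N, forall k x, (N <= k)%N -> ~ O k x].

Definition in_mesh (O : hier) (c : cell) : Prop :=
  [/\ is_cell c, subr (cell_box c) (O c.1) & ~ subr (cell_box c) (O c.1.+1)].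

Definition in_basis (O : hier) (b : cell) : Prop :=
  [/\ is_bspl b, subr (supp_box b) (O b.1) & ~ subr (supp_box b) (O b.1.+1)].

Definition neighbor (O : hier) (c c' : cell) : Prop :=
  in_mesh O c' /\ exists b, [/\ in_basis O b, subr (cell_box c) (supp_box b)
                                & subr (cell_box c') (supp_box b)].

Definition bad_neighbor (O : hier) (c c' : cell) : Prop :=
  neighbor O c c' /\ c'.1.+1 = c.1.

Definition admissible (O : hier) : Prop :=
  forall c c', in_mesh O c -> neighbor O c c' ->
    (c.1 <= c'.1 + 1)%N /\ (c'.1 <= c.1 + 1)%N.

(* the iterates M^(i) of the marking loop *)
Fixpoint marks (O : hier) (M : cell -> Prop) (n : nat) : cell -> Prop :=
  match n with
  | 0 => M
  | n.+1 => fun c => marks O M n c \/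
                     exists2 c0, marks O M n c0 & bad_neighbor O c0 c
  end.

(* refine(T, M) with the convention refine(T,M) := refine(T, M \cap T);
   the final (stationary) marked set is the union of all iterates *)
Definition refine (O : hier) (M : cell -> Prop) : hier :=
  fun k x => O k x \/
    exists c, [/\ exists n, marks O (fun c => M c /\ in_mesh O c) n c,
                  c.1.+1 = k & cell_box c x].

Definition refine_seq (O : hier) (Ms : seq cell) : hier :=
  foldl (fun O' c => refine O' (fun c' => c' = c)) O Ms.

End Hier.

(* Refining first by [A] and then by one more cell [T] gives the same
   hierarchy as refining by [A ∪ {T}] at once; the theorem follows by induction
   along the sequence of marked cells.  The point is that the closure of [T]
   under bad neighbours is the same before and after the refinement by [A], up
   to cells already marked by [A].  This rests on a support lemma for admissible
   meshes: if a mesh cell of level > l lies in the support of a level-l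
   B-spline [B], then [supp B] is contained in [Ω^l], and even in [Ω^(l+1)] if
   the cell has level > l+1 (otherwise [B] would be active and would make that
   cell a neighbour of a mesh cell two levels coarser).  Hence a B-spline
   witnessing a bad-neighbour relation lives exactly on the coarser level and is
   active both before and after refining by [A]. *)

From HB Require Import structures.
From mathcomp Require Import all_boot all_order all_algebra.
From mathcomp Require Import zify lra.
From Stdlib Require Import Classical FunctionalExtensionality PropExtensionality.
Import Order.TTheory GRing.Theory Num.Theory.
Set Implicit Arguments. Unset Strict Implicit. Unset Printing Implicit Defensive.
Local Open Scope ring_scope.

Section KnotVectors.
Variable R : realFieldType.
Implicit Types (t : seq R) (a b : R).

Lemma sorted_nth_le t i j : sorted <=%R t -> (i <= j)%N -> (j < size t)%N ->
  nth 0 t i <= nth 0 t j.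
Proof.
by move=> st hij hj; apply: (sorted_leq_nth le_trans lexx) => //; rewrite inE /=; lia.
Qed.

Lemma nondegenerate_span_cover t (a b : nat) v : sorted <=%R t -> (b < size t)%N ->
  (a < b)%N -> nth 0 t a < nth 0 t b -> nth 0 t a <= v <= nth 0 t b ->
  exists m, [/\ (a <= m)%N, (m < b)%N, nth 0 t m < nth 0 t m.+1
              & nth 0 t m <= v <= nth 0 t m.+1].
Proof.
move=> st; elim: b => [|b IH] // hb hab hlt /andP[hav hvb].
have hbb : nth 0 t b <= nth 0 t b.+1 by apply: sorted_nth_le.
have a_lt_b (w : R) : w < nth 0 t b -> nth 0 t a <= w -> (a < b)%N.
  move=> hwb haw; rewrite ltn_neqAle -ltnS hab andbT.
  by apply: contraTneq hwb => <-; rewrite -leNgt.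
case: (lerP (nth 0 t b) v) => hbv.
  case: (ltrP (nth 0 t b) (nth 0 t b.+1)) => hlt2.
    by exists b; split; rewrite ?hbv ?hvb //; lia.
  have eqb : nth 0 t b = nth 0 t b.+1 by apply/eqP; rewrite eq_le hbb hlt2.
  have hlt' : nth 0 t a < nth 0 t b by rewrite eqb.
  have [m [? ? ? ?]] := IH ltac:(lia) (a_lt_b _ hlt' (lexx _)) hlt' ltac:(by rewrite hav eqb).
  by exists m; split => //; lia.
have hlt' : nth 0 t a < nth 0 t b by apply: le_lt_trans hbv.
have [m [? ? ? ?]] := IH ltac:(lia) (a_lt_b _ hlt' (lexx _)) hlt' ltac:(by rewrite hav ltW).
by exists m; split => //; lia.
Qed.

Lemma incr_add_leq (n : nat) (f : nat -> nat) :
  (forall i, (i.+1 < n)%N -> (f i < f i.+1)%N) ->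
  forall i r, (i + r < n)%N -> (f i + r <= f (i + r))%N.
Proof.
move=> incf i; elim=> [|r IH] Hr; first by rewrite !addn0.
by have := IH ltac:(lia); have := incf (i + r)%N ltac:(lia); rewrite !addnS; lia.
Qed.

Lemma ins_mid_cons2 a b t : ins_mid [:: a, b & t] =
  if a < b then a :: (a + b) / 2%:R :: ins_mid (b :: t) else a :: ins_mid (b :: t).
Proof. by []. Qed.

Lemma ins_mid_head a t : exists s, ins_mid (a :: t) = a :: s.
Proof. by case: t => [|b t] /=; [exists [::] | case: ifP => _; eexists]. Qed.

Lemma sorted_ins_mid t : sorted <=%R t -> sorted <=%R (ins_mid t).
Proof.
elim: t => [|a [|b t] IH] //= /andP[hab hs]; rewrite -/(ins_mid (b :: t)).
have := IH hs; have [s ->] := ins_mid_head b t.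
by case: ifP => hlt /= ->; rewrite ?hab // andbT; apply/andP; split; lra.
Qed.

Lemma all_itv_ins_mid a b t : all (fun v => a <= v <= b) t ->
  all (fun v => a <= v <= b) (ins_mid t).
Proof.
elim: t => [|x [|y t] IH] //= /andP[hx hs]; rewrite -/(ins_mid (y :: t)).
have := IH hs; have [s ->] := ins_mid_head y t; move: hs => /= /andP[hy _].
case: ifP => _ /= -> ; rewrite hx //= andbT.
by move: hx hy => /andP[? ?] /andP[? ?]; apply/andP; split; lra.
Qed.

Lemma size_ins_mid t : (size t <= size (ins_mid t))%N.
Proof.
elim: t => [|a [|b t] IH] //=; rewrite -/(ins_mid (b :: t)).
by have [s e] := ins_mid_head b t; rewrite e /= in IH *; case: ifP => _ /=; lia.
Qed.

Lemma last_ins_mid x t : last x (ins_mid t) = last x t.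
Proof.
elim: t x => [|a [|b t] IH] x //=; rewrite -/(ins_mid (b :: t)).
by have [s e] := ins_mid_head b t; move: (IH x); rewrite e /= => <-; case: ifP.
Qed.

(* [pi i] is the position in [ins_mid t] of the old knot [t_i]. *)
Lemma ins_mid_embedding t : exists pi : nat -> nat,
  [/\ forall i, (i.+1 < size t)%N -> (pi i < pi i.+1)%N,
      forall i, (i < size t)%N -> (pi i < size (ins_mid t))%N /\
                 nth 0 (ins_mid t) (pi i) = nth 0 t i
    & forall j, (j < size (ins_mid t))%N -> exists2 i, (i < size t)%N &
                 (pi i <= j)%N /\ ((i.+1 < size t)%N -> (j < pi i.+1)%N)].
Proof.
elim: t => [|a [|b t] IH]; first by exists id.
  exists (fun _ => 0%N); split => //= [i|j]; rewrite ltnS leqn0 => /eqP ->//.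
  by exists 0%N.
have [pi' [P1 P2 P3]] := IH.
set s' := ins_mid (b :: t) in P2 P3.
pose sh := if a < b then 2%N else 1%N.
have [E0 E1 E2] : [/\ nth 0 (ins_mid [:: a, b & t]) 0 = a,
    forall k, nth 0 (ins_mid [:: a, b & t]) (sh + k) = nth 0 s' k
  & size (ins_mid [:: a, b & t]) = (sh + size s')%N].
  by rewrite ins_mid_cons2 /sh; case: ifP.
have sh12 : (1 <= sh <= 2)%N by rewrite /sh; case: ifP.
move: (ins_mid _) E0 E1 E2 => s E0 E1 E2.
exists (fun i => if i is i'.+1 then (sh + pi' i')%N else 0%N); split.
- by case=> [|i] /= Hi; [lia | have := P1 i Hi; lia].
- case=> [|i] /= Hi; first by rewrite E2 E0; split => //; lia.
  by have [H1 H2] := P2 i Hi; rewrite E1 H2 E2; split => //; lia.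
- move=> j; rewrite E2 => Hj; case: (ltnP j sh) => hj.
    by exists 0%N => //; split => // _; lia.
  have [i Hi [H1 H2]] := P3 (j - sh)%N ltac:(lia).
  exists i.+1 => //; split=> [|Hi']; first lia.
  by have := H2 Hi'; lia.
Qed.

Lemma ins_mid_span_parent t (q j : nat) : sorted <=%R t -> (q.+2 <= size t)%N ->
  ((j + q).+1 < size (ins_mid t))%N ->
  exists m, [/\ ((m + q).+1 < size t)%N, nth 0 t m <= nth 0 (ins_mid t) j
             & nth 0 (ins_mid t) (j + q).+1 <= nth 0 t (m + q).+1].
Proof.
move=> st hq hj; have ss := sorted_ins_mid st.
have [pi [incr pi_nth pi_cover]] := ins_mid_embedding t.
have [i Hi [pi_i_le_j j_lt_pi_next]] := pi_cover j ltac:(lia).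
have [_ pi_i] := pi_nth i Hi.
case: (ltnP (i + q).+1 (size t)) => hiq.
  exists i; split => //; first by rewrite -pi_i; apply: sorted_nth_le => //; lia.
  have [pi_lt <-] := pi_nth (i + q).+1 hiq.
  have := incr_add_leq incr (i := i.+1) (r := q) ltac:(lia).
  have := j_lt_pi_next ltac:(lia); rewrite addSn => ha hb.
  by apply: sorted_nth_le => //; lia.
exists (size t - q.+2)%N; split; first lia.
- apply: (@le_trans _ _ (nth 0 t i)); first by apply: sorted_nth_le => //; lia.
  by rewrite -pi_i; apply: sorted_nth_le => //; lia.
- have -> : ((size t - q.+2) + q).+1 = (size t).-1 by lia.
  rewrite nth_last -(last_ins_mid 0 t) -nth_last.
  by apply: sorted_nth_le => //; lia.
Qed.

End KnotVectors.

Section Geometry.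
Variables (R : realFieldType) (d : nat) (p : 'I_d -> nat) (K0 : 'I_d -> seq R).
Hypothesis K0_open : forall i, open_knots (p i) (K0 i).

Lemma knots_sorted k i : sorted <=%R (knots K0 k i).
Proof. by elim: k => [|k IH]; [case: (K0_open i) | exact: sorted_ins_mid]. Qed.

Lemma size_knots k i : ((p i).+2 <= size (knots K0 k i))%N.
Proof.
elim: k => [|k IH]; first by case: (K0_open i) => _ ? _ _ _; rewrite /knots /=; lia.
exact: leq_trans IH (size_ins_mid _).
Qed.

Lemma knots0_in01 i : all (fun v => 0 <= v <= 1) (K0 i).
Proof.
case: (K0_open i) => st hs htk hdr _; move: (K0 i) st hs htk hdr => t st hs htk hdr.
have t0 : nth 0 t 0 = 0 by move/(congr1 (nth 0 ^~ 0)): htk; rewrite nth_take.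
have t1 : nth 0 t (size t).-1 = 1.
  move/(congr1 (nth 0 ^~ (p i))): hdr; rewrite nth_drop nth_nseq ltnSn.
  by have -> : (size t - (p i).+1 + p i = (size t).-1)%N by lia.
apply/(all_nthP 0) => j hj; apply/andP; split.
- by rewrite -[X in X <= _]t0; apply: sorted_nth_le.
- rewrite -[X in _ <= X]t1; apply: sorted_nth_le => //.
  + by move: hj; case: (size t) => //= n; lia.
  + lia.
Qed.

Lemma nth_knots_in01 k i j : (j < size (knots K0 k i))%N ->
  0 <= nth 0 (knots K0 k i) j <= 1.
Proof.
have : all (fun v => 0 <= v <= 1) (knots K0 k i).
  by elim: k => [|k IH]; [exact: knots0_in01 | exact: all_itv_ins_mid].
by move/(all_nthP 0); apply.
Qed.

Definition cell_lo (c : cell d) : pt R d := fun i => nth 0 (knots K0 c.1 i) (c.2 i).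
Definition cell_hi (c : cell d) : pt R d := fun i => nth 0 (knots K0 c.1 i) (c.2 i).+1.
Definition cell_center (c : cell d) : pt R d := fun i => (cell_lo c i + cell_hi c i) / 2%:R.

Lemma cell_box_lo c : is_cell K0 c -> cell_box K0 c (cell_lo c).
Proof. by move=> hc i; have [_ h] := hc i; rewrite /cell_lo lexx ltW. Qed.

Lemma cell_box_hi c : is_cell K0 c -> cell_box K0 c (cell_hi c).
Proof. by move=> hc i; have [_ h] := hc i; rewrite /cell_hi lexx ltW. Qed.

Lemma cell_box_center c : is_cell K0 c -> cell_box K0 c (cell_center c).
Proof.
move=> hc i; have [_ h] := hc i.
by rewrite /cell_center /cell_lo /cell_hi; apply/andP; split; lra.
Qed.

Lemma cell_center_eq c c' : is_cell K0 c -> is_cell K0 c' -> c.1 = c'.1 ->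
  cell_box K0 c' (cell_center c) -> c = c'.
Proof.
case: c c' => k f [k' f'] /= hc hc' ek hb; subst k'; congr pair; apply/ffunP => i.
have [s1 l1] := hc i; have [s2 l2] := hc' i; have /andP[] := hb i.
rewrite /cell_center /cell_lo /cell_hi /= => b1 b2.
have st := knots_sorted k i.
case: (ltngtP (f i) (f' i)) => // h; exfalso; move: l1 => /= l1.
- by have := sorted_nth_le st h ltac:(by simpl in *; lia); lra.
- by have := sorted_nth_le st h ltac:(by simpl in *; lia); lra.
Qed.

Lemma bspl_parent l (B : cell d) : is_bspl p K0 B -> B.1 = l.+1 ->
  exists A : cell d,
    [/\ A.1 = l, is_bspl p K0 A & subr (supp_box p K0 B) (supp_box p K0 A)].
Proof.
case: B => k f /= hB ek; subst k.
have [g Hg] := fin_all_exists (fun i => ins_mid_span_parent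
   (knots_sorted l i) (size_knots l i) (hB i)).
exists (l, [ffun i => g i]); split => // [i | x hx i] /=; rewrite ffunE.
  by case: (Hg i).
have [_ h1 h2] := Hg i; have /andP[x1 x2] := hx i.
by apply/andP; split; [exact: le_trans h1 x1 | exact: le_trans x2 h2].
Qed.

(* The cell found is the level-[B.1] cell through a point of [supp B] outside
   [O B.1.+1]; the cell [n] only serves to make the spans of [B] nondegenerate. *)
Lemma active_bspl_mesh_cell (O : hier R d) (B n : cell d) :
  is_bspl p K0 B -> is_cell K0 n -> subr (cell_box K0 n) (supp_box p K0 B) ->
  subr (supp_box p K0 B) (O B.1) -> ~ subr (supp_box p K0 B) (O B.1.+1) ->
  exists c : cell d,
    [/\ in_mesh K0 O c, c.1 = B.1 & subr (cell_box K0 c) (supp_box p K0 B)].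
Proof.
move=> hB hn hnB hBO hBO1.
have [x [hx hxO]] : exists x, supp_box p K0 B x /\ ~ O B.1.+1 x.
  by apply: NNPP => hne; apply: hBO1 => x hx; apply: NNPP => hO; apply: hne; exists x.
have span_x i : exists m, [/\ (B.2 i <= m)%N, (m < (B.2 i + p i).+1)%N,
    nth 0 (knots K0 B.1 i) m < nth 0 (knots K0 B.1 i) m.+1
  & nth 0 (knots K0 B.1 i) m <= x i <= nth 0 (knots K0 B.1 i) m.+1].
  have /andP[lo_n _] := hnB _ (cell_box_lo hn) i.
  have /andP[_ hi_n] := hnB _ (cell_box_hi hn) i.
  have [_ n_nondeg] := hn i.
  apply: nondegenerate_span_cover (hx i) => //; first exact: knots_sorted.
  - by rewrite ltnS leq_addr.
  - exact: le_lt_trans lo_n (lt_le_trans n_nondeg hi_n).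
have [g Hg] := fin_all_exists span_x.
pose c : cell d := (B.1, [ffun i => g i]).
have hcB : subr (cell_box K0 c) (supp_box p K0 B).
  move=> y hy i; move: (hy i); rewrite /= ffunE => /andP[y1 y2].
  have [h1 h2 _ _] := Hg i; have st := knots_sorted B.1 i.
  have hBi := hB i; apply/andP; split; [apply: le_trans y1 | apply: le_trans y2 _];
    apply: sorted_nth_le => //; lia.
exists c; split => //; split.
- move=> i /=; rewrite ffunE; have [_ h2 h3 _] := Hg i; split => //.
  exact: leq_ltn_trans h2 (hB i).
- by move=> y hy; apply/hBO/hcB.
- by move=> hsub; apply/hxO/hsub => i /=; rewrite ffunE; case: (Hg i).
Qed.
End Geometry.

Section Marking.
Variables (R : realFieldType) (d : nat) (p : 'I_d -> nat) (K0 : 'I_d -> seq R).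
Implicit Types (O : hier R d) (M : cell d -> Prop).

Definition marked O M (c : cell d) : Prop :=
  exists n, marks p K0 O (fun c => M c /\ in_mesh K0 O c) n c.

Lemma refineE O M : refine p K0 O M =
  fun k x => O k x \/ exists c, [/\ marked O M c, c.1.+1 = k & cell_box K0 c x].
Proof. by []. Qed.

Lemma marked_base O M c : M c -> in_mesh K0 O c -> marked O M c.
Proof. by exists 0%N. Qed.

Lemma marked_step O M c0 c : marked O M c0 -> bad_neighbor p K0 O c0 c -> marked O M c.
Proof. by move=> [n h] hb; exists n.+1; right; exists c0. Qed.

Lemma marked_ind O M (P : cell d -> Prop) :
  (forall c, M c -> in_mesh K0 O c -> P c) ->
  (forall c0 c, marked O M c0 -> P c0 -> bad_neighbor p K0 O c0 c -> P c) ->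
  forall c, marked O M c -> P c.
Proof.
move=> hbase hstep c [n]; elim: n c => [|n IH] c /=; first by case; apply: hbase.
by case=> [|[c0 h0 hbn]]; [exact: IH | apply: (hstep c0) => //; [exists n | apply: IH]].
Qed.

Lemma marked_in_mesh O M c : marked O M c -> in_mesh K0 O c.
Proof. by move: c; apply: marked_ind => // c0 c _ _ [[]]. Qed.

Lemma markedU O M1 M2 c :
  marked O (fun c => M1 c \/ M2 c) c <-> marked O M1 c \/ marked O M2 c.
Proof.
split.
- move: c; apply: marked_ind.
  + by move=> c [] h hm; [left | right]; apply: marked_base.
  + by move=> c0 c _ [] h hb; [left | right]; apply: marked_step hb.
- by case; move: c; apply: marked_ind => [c h hm | c0 c _ h hb];
    by [apply: marked_base => //; tauto | apply: marked_step hb].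
Qed.

Lemma marked0 O c : ~ marked O (fun c' => c' \in [::]) c.
Proof. by move: c; apply: marked_ind. Qed.

Lemma hier_anti O : (forall k x, O k.+1 x -> O k x) ->
  forall k m x, (k <= m)%N -> O m x -> O k x.
Proof.
move=> OS k; elim=> [|m IH] x; first by rewrite leqn0 => /eqP ->.
by rewrite leq_eqVlt => /orP[/eqP -> // | hk] h; apply/IH/OS.
Qed.

Lemma refine_nested O M : (forall k x, O k.+1 x -> O k x) ->
  forall k x, refine p K0 O M k.+1 x -> refine p K0 O M k x.
Proof.
move=> OS k x [h | [c [hc /succn_inj <- hx]]]; left; first exact: OS.
by have [_ hsub _] := marked_in_mesh hc; apply: hsub.
Qed.

Lemma refine_seq_rcons O s T : refine_seq p K0 O (rcons s T) =
  refine p K0 (refine_seq p K0 O s) (fun c' => c' = T).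
Proof. by rewrite /refine_seq foldl_rcons. Qed.

End Marking.

Section AdmissibleMesh.
Variables (R : realFieldType) (d : nat) (p : 'I_d -> nat) (K0 : 'I_d -> seq R).
Hypothesis K0_open : forall i, open_knots (p i) (K0 i).
Variable O : hier R d.
Hypothesis O_mesh : hier_mesh K0 O.
Hypothesis O_adm : admissible p K0 O.

Lemma hier_nested k x : O k.+1 x -> O k x.
Proof. by case: O_mesh => _ OS _ _; apply: OS. Qed.

Lemma supp_sub_hier0 B : is_bspl p K0 B -> subr (supp_box p K0 B) (O 0).
Proof.
move=> hB x hx; case: O_mesh => O0 _ _ _; apply/O0 => i.
have hBi := hB i; have /andP[x1 x2] := hx i.
have lo_lt : (B.2 i < size (knots K0 B.1 i))%N by lia.
have /andP[lo0 _] := nth_knots_in01 K0_open lo_lt.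
have /andP[_ hi1] := nth_knots_in01 K0_open hBi.
by apply/andP; split; [exact: le_trans lo0 x1 | exact: le_trans x2 hi1].
Qed.

Lemma supp_sub_hierS B n : is_bspl p K0 B -> in_mesh K0 O n -> (B.1.+1 < n.1)%N ->
  subr (cell_box K0 n) (supp_box p K0 B) -> subr (supp_box p K0 B) (O B.1) ->
  subr (supp_box p K0 B) (O B.1.+1).
Proof.
move=> hB hn hlt hnB hBO; apply: NNPP => hBO1; have [hnc _ _] := hn.
have [c [hc ec hcB]] := active_bspl_mesh_cell K0_open hB hnc hnB hBO hBO1.
have hnb : neighbor p K0 O n c by split => //; exists B.
by have [] := O_adm hn hnb; rewrite ec; lia.
Qed.

Lemma supp_sub_hier_of_finer_cell B n : is_bspl p K0 B -> in_mesh K0 O n ->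
  (B.1 < n.1)%N -> subr (cell_box K0 n) (supp_box p K0 B) ->
  subr (supp_box p K0 B) (O B.1).
Proof.
have [l eB] : exists l, B.1 = l by exists B.1.
elim: l B eB => [|l IH] B eB hB hn hlt hnB; first by rewrite eB; apply: supp_sub_hier0.
have [A [eA hA hBA]] := bspl_parent K0_open hB eB.
have hnA : subr (cell_box K0 n) (supp_box p K0 A) by move=> x /hnB /hBA.
move=> x /hBA; rewrite eB -eA; apply: (supp_sub_hierS hA hn) => //; first lia.
by apply: IH => //; lia.
Qed.

Lemma supp_sub_hierS_of_finer_cell B n : is_bspl p K0 B -> in_mesh K0 O n ->
  (B.1.+1 < n.1)%N -> subr (cell_box K0 n) (supp_box p K0 B) ->
  subr (supp_box p K0 B) (O B.1.+1).
Proof.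
move=> hB hn hlt hnB; apply: (supp_sub_hierS hB hn hlt hnB).
by apply: (supp_sub_hier_of_finer_cell hB hn _ hnB); lia.
Qed.

Lemma bad_neighbor_bspl_level (O' : hier R d) c0 c b :
  (forall k x, O' k.+1 x -> O' k x) -> (forall k x, O k x -> O' k x) ->
  in_mesh K0 O c0 -> c0.1 = c.1.+1 -> in_basis p K0 O' b ->
  subr (cell_box K0 c0) (supp_box p K0 b) -> subr (cell_box K0 c) (supp_box p K0 b) ->
  ~ subr (cell_box K0 c) (O' c.1.+1) -> b.1 = c.1.
Proof.
move=> O'S sub_O' hc0 lvl [hb hbO' hbO'1] hc0b hcb hcO'.
have b_le_c : (b.1 <= c.1)%N.
  rewrite leqNgt; apply: contra_notN hcO' => hlt x /hcb /hbO'.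
  exact: hier_anti O'S _ _ _ hlt.
have c0_le_b : ~ (b.1.+1 < c0.1)%N.
  move=> hlt; apply: hbO'1 => x hx; apply: sub_O'.
  exact: supp_sub_hierS_of_finer_cell hb hc0 hlt hc0b _ hx.
lia.
Qed.

Lemma in_mesh_refine A c : in_mesh K0 O c -> ~ marked p K0 O A c ->
  in_mesh K0 (refine p K0 O A) c.
Proof.
move=> [hc hcO hcO1] hnA; split => // [x hx|]; first by left; apply: hcO.
move=> /(_ _ (cell_box_center hc)) [hO1 | [c' [hc' /succn_inj lvl hb]]].
- case: O_mesh => _ _ O_cells _; have [cs [cs_cells O_cs]] := O_cells c.1.
  have [c' c'_cs hb] := (O_cs _).1 hO1; have [hc' lvl] := cs_cells _ c'_cs.
  have ec := cell_center_eq K0_open hc hc' (esym lvl) hb; subst c'.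
  by apply: hcO1 => y hy; apply/O_cs; exists c.
- have [hc'_cell _ _] := marked_in_mesh hc'.
  have ec := cell_center_eq K0_open hc hc'_cell (esym lvl) hb; subst c'.
  exact: hnA hc'.
Qed.

Section RefineOneMore.
Variables (A : cell d -> Prop) (T : cell d).
Hypothesis T_mesh : in_mesh K0 O T.
Local Notation O1 := (refine p K0 O A).

Lemma marked_sub_refine c : marked p K0 O A c -> subr (cell_box K0 c) (O1 c.1.+1).
Proof. by move=> hc x hx; right; exists c. Qed.

Lemma marked_after_refine c : marked p K0 O1 (fun c' => c' = T) c ->
  [/\ in_mesh K0 O c, ~ marked p K0 O A c & marked p K0 O (fun c' => c' = T) c].
Proof.
move: c; apply: marked_ind => [c -> [_ _ hT1] | c0 c _ [hm0 _ hT0] [hnb hlvl]].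
  by split=> // [hA|]; [apply/hT1/marked_sub_refine | apply: marked_base].
have [[hc hcO1 hcO1'] [b [hb hb0 hbc]]] := hnb.
have hnA : ~ marked p K0 O A c by move/marked_sub_refine.
have lvl : b.1 = c.1.
  apply: (bad_neighbor_bspl_level (O' := O1)) hm0 (esym hlvl) hb hb0 hbc hcO1' => //.
  - exact: refine_nested hier_nested.
  - by move=> k x h; left.
have [hbs _ hbO1'] := hb.
have hbO : subr (supp_box p K0 b) (O b.1).
  by apply: (supp_sub_hier_of_finer_cell hbs hm0 _ hb0); lia.
have hcO' : ~ subr (cell_box K0 c) (O c.1.+1).
  by move=> h; apply: hcO1' => x /h; left.
have hcm : in_mesh K0 O c by split=> // x /hbc/hbO; rewrite lvl.
split=> //; apply: marked_step hT0 _; split=> //; split=> //; exists b; split=> //.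
by split=> // h; apply: hcO' => x /hbc/h; rewrite lvl.
Qed.

Lemma marked_before_refine c : marked p K0 O (fun c' => c' = T) c ->
  marked p K0 O A c \/ marked p K0 O1 (fun c' => c' = T) c.
Proof.
move: c; apply: marked_ind => [c -> _ | c0 c _ [hA0 | hT0] hbn].
- case: (classic (marked p K0 O A T)) => hA; [by left | right].
  exact: marked_base (in_mesh_refine T_mesh hA).
- by left; apply: marked_step hA0 hbn.
case: (classic (marked p K0 O A c)) => hAc; [by left | right].
have [hm0 _ _] := marked_after_refine hT0.
have [[hcm [b [hb hb0 hbc]]] hlvl] := hbn.
have hcm1 := in_mesh_refine hcm hAc.
have lvl : b.1 = c.1.
  by apply: (bad_neighbor_bspl_level hier_nested) hm0 (esym hlvl) hb hb0 hbc _ => //; case: hcm.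
have [hbs hbO _] := hb.
apply: marked_step hT0 _; split=> //; split=> //; exists b; split=> //.
split=> // [x /hbO | h]; first by left.
by have [_ _] := hcm1; apply=> x /hbc/h; rewrite lvl.
Qed.

Lemma refineU1 k x : refine p K0 O1 (fun c' => c' = T) k x <->
  refine p K0 O (fun c => A c \/ c = T) k x.
Proof.
rewrite !refineE; split.
- case=> [[h | [c [hc hk hx]]] | [c [hc hk hx]]]; first by left.
  + by right; exists c; split => //; apply/markedU; left.
  + by right; exists c; split => //; apply/markedU; right; case: (marked_after_refine hc).
- case=> [h | [c [/markedU[hc | hc] hk hx]]]; first by left; left.
  + by left; right; exists c.
  + case: (marked_before_refine hc) => hc'; [left; right | right]; by exists c.
Qed.
End RefineOneMore.

Lemma refine_seqE (s : seq (cell d)) : (forall c, c \in s -> in_mesh K0 O c) ->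
  refine_seq p K0 O s = refine p K0 O (fun c => c \in s).
Proof.
elim/last_ind: s => [|s T IH] hs.
  apply: functional_extensionality => k; apply: functional_extensionality => x.
  apply: propositional_extensionality; rewrite refineE.
  by split=> [|[//|[c [/marked0]]]]; first left.
rewrite refine_seq_rcons IH => [|c hc]; last by apply: hs; rewrite mem_rcons inE hc orbT.
have hT : in_mesh K0 O T by apply: hs; rewrite mem_rcons mem_head.
apply: functional_extensionality => k; apply: functional_extensionality => x.
apply: propositional_extensionality; rewrite refineU1 //.
have -> // : (fun c : cell d => (c \in rcons s T : Prop)) = (fun c => c \in s \/ c = T).
apply: functional_extensionality => c; apply: propositional_extensionality.
rewrite mem_rcons inE; split=> [/orP[/eqP|]|[|]]; [by right | by left | |].
- by move=> ->; rewrite orbT.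
- by move=> ->; rewrite eqxx.
Qed.
End AdmissibleMesh.

Theorem lemma5p4 (R : realFieldType) (d : nat) (p : 'I_d -> nat)
    (K0 : 'I_d -> seq R) (O : hier R d) (Ms : seq (cell d)) :
  (2 <= d)%N ->
  (forall i, (1 <= p i)%N) ->
  (forall i, open_knots (p i) (K0 i)) ->
  hier_mesh K0 O ->
  admissible p K0 O ->
  uniq Ms ->
  (forall c, c \in Ms -> in_mesh K0 O c) ->
  forall c : cell d,
    in_mesh K0 (refine p K0 O (fun c' => c' \in Ms)) c <->
    in_mesh K0 (refine_seq p K0 O Ms) c.
Proof.
move=> _ _ K0_open O_mesh O_adm _ Ms_mesh c.
by rewrite (refine_seqE K0_open O_mesh O_adm Ms_mesh).
Qed.
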